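(* Let $\Gamma\in\mathbb{R}^{n\times m}$ and let $R:\mathbb{R}^n_{\ge0}\to\mathbb{R}^m$ be locally Lipschitz such that $\dot S=\Gamma R(S)$ leaves $\mathbb{R}^n_{\ge0}$ invariant and is forward complete. For $\sigma\in\mathbb{R}^n_{\ge0}$ consider $\dot x=f_\sigma(x):=R(\sigma+\Gamma x)$ on $X_\sigma=\{x\in\mathbb{R}^m:\sigma+\Gamma x\ge0\}$. Suppose that: (1) $\Gamma$ has rank $m-1$, with kernel spanned by a unit vector all of whose entries are positive; (2) every solution of $\dot S=\Gamma R(S)$ in $\mathbb{R}^n_{\ge0}$ is bounded; (3) $\sigma\in\mathbb{R}^n_{\ge0}$ is such that $\dot x=f_\sigma(x)$ on $X_\sigma$ is strongly monotone with respect to the order induced by the cone $\mathbb{R}^m_{\ge0}$ (i.e. if $\xi_1\ge\xi_2$, $\xi_1\ne\xi_2$, then every component of $\varphi_t(\xi_1)-\varphi_t(\xi_2)$ is strictly positive for all $t>0$). Then there is $\zeta=\zeta_\sigma\in\mathbb{R}^n_{\ge0}$ such that for each $\rho\in\mathbb{R}^n_{\ge0}$ with $\rho-\sigma\in\operatorname{Image}(\Gamma)$, the solution $S$ of $\dot S=\Gamma R(S)$ with $S(0)=\rho$ satisfies $S(t)\to\zeta$ as $t\to\infty$.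
   Context: Inequalities between vectors are componentwise; $\varphi_t$ denotes the flow of $\dot x=f_\sigma(x)$ on $X_\sigma$. *)

From HB Require Import structures.
From mathcomp Require Import all_boot all_order all_algebra.
From mathcomp Require Import all_classical all_reals all_analysis.
Set Implicit Arguments. Unset Strict Implicit. Unset Printing Implicit Defensive.
Import Order.TTheory GRing.Theory Num.Theory.
Import numFieldNormedType.Exports.
Local Open Scope classical_set_scope.
Local Open Scope ring_scope.

Definition vnonneg (R : realType) (k : nat) (v : 'cV[R]_k) : Prop :=
  forall i : 'I_k, 0 <= v i ord0.

(* the l1 norm (any norm on R^k is equivalent) *)
Definition norm1 (R : realType) (k : nat) (v : 'cV[R]_k) : R :=
  \sum_(i < k) `|v i ord0|.

Definition norm2sq (R : realType) (k : nat) (v : 'cV[R]_k) : R :=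
  \sum_(i < k) (v i ord0) ^+ 2.

Definition loc_lipschitz_on (R : realType) (k l : nat)
    (D : set 'cV[R]_k) (F : 'cV[R]_k -> 'cV[R]_l) : Prop :=
  forall p, D p -> exists r : R, exists L : R, 0 < r /\
    forall y z, D y -> D z -> norm1 (y - p) < r -> norm1 (z - p) < r ->
      norm1 (F y - F z) <= L * norm1 (y - z).

Definition is_fwd_solution (R : realType) (k : nat)
    (F : 'cV[R]_k -> 'cV[R]_k) (D : set 'cV[R]_k) (x : R -> 'cV[R]_k) : Prop :=
  (forall t : R, 0 <= t -> D (x t)) /\
  (forall t : R, 0 < t -> forall i : 'I_k,
      is_derive t (1 : R) (fun s : R => x s i ord0) (F (x t) i ord0)) /\
  (forall i : 'I_k, (fun s : R => x s i ord0) @ 0^'+ --> x 0 i ord0).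

(* Since Gamma v = 0, the reduced vector field f_sigma is invariant under
   translation along the positive kernel vector v. Together with strong
   monotonicity this makes the oscillation
     osc_v a = max_i a_i / v_i - min_i a_i / v_i,
   a seminorm with kernel R v, nonincreasing along differences of solutions, and
   strictly decreasing unless the initial difference lies on R v.
   A solution S with S(0) - sigma in Im Gamma lifts to a solution x of the
   reduced system with S = sigma + Gamma x; boundedness of S bounds x modulo R v,
   so x has a cluster point q modulo R v. Comparing x with the solution y issued
   from q (a LaSalle-type argument) shows that y stays on the line q + R v, hence
   x(t) - q approaches R v and S(t) -> sigma + Gamma q. Two solutions moving along
   such lines start R v-apart, again by the strict decrease, so the limit
   sigma + Gamma q does not depend on rho. *)

From HB Require Import structures.
From mathcomp Require Import all_boot all_order all_algebra.
From mathcomp Require Import all_classical all_reals all_analysis.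
From mathcomp Require Import ring lra.
Import Order.TTheory GRing.Theory Num.Theory.
Import numFieldNormedType.Exports.
Local Open Scope classical_set_scope.
Local Open Scope ring_scope.
Set Implicit Arguments. Unset Strict Implicit. Unset Printing Implicit Defensive.

Section Oscillation.
Variables (R : realType) (k : nat) (v : 'cV[R]_k.+1).

Definition ratio (a : 'cV[R]_k.+1) (i : 'I_k.+1) : R := a i ord0 / v i ord0.

Definition max_ratio (a : 'cV[R]_k.+1) : R :=
  ratio a (Order.arg_max ord0 xpredT (ratio a)).
Definition min_ratio (a : 'cV[R]_k.+1) : R :=
  ratio a (Order.arg_min ord0 xpredT (ratio a)).

Definition osc (a : 'cV[R]_k.+1) : R := max_ratio a - min_ratio a.

Definition in_band (a : 'cV[R]_k.+1) (d : R) : Prop :=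
  exists c, forall i, c * v i ord0 <= a i ord0 <= (c + d) * v i ord0.

Lemma max_ratio_ge a i : ratio a i <= max_ratio a.
Proof. by rewrite /max_ratio; case: arg_maxP => // j _ /(_ i isT). Qed.

Lemma min_ratio_le a i : min_ratio a <= ratio a i.
Proof. by rewrite /min_ratio; case: arg_minP => // j _ /(_ i isT). Qed.

Lemma osc_ge0 a : 0 <= osc a.
Proof. by rewrite subr_ge0 (le_trans (min_ratio_le a ord0)) ?max_ratio_ge. Qed.

Lemma osc0 : osc 0 = 0.
Proof. by rewrite /osc /max_ratio /min_ratio /ratio !mxE !mul0r subrr. Qed.

Lemma in_bandD a b d1 d2 :
  in_band a d1 -> in_band b d2 -> in_band (a + b) (d1 + d2).
Proof.
case=> c1 h1 [c2 h2]; exists (c1 + c2) => i; rewrite !mxE.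
have /andP[l1 u1] := h1 i; have /andP[l2 u2] := h2 i.
by rewrite mulrDl lerD //= (le_trans (lerD u1 u2)) // -mulrDl addrACA.
Qed.

Lemma in_bandN a d : in_band a d -> in_band (- a) d.
Proof.
case=> c h; exists (- c - d) => i; have /andP[l u] := h i.
by rewrite !mxE subrK mulNr lerN2 l andbT -opprD mulNr lerN2.
Qed.

Lemma in_band_scale c : in_band (c *: v) 0.
Proof. by exists c => i; rewrite addr0 mxE lexx. Qed.

Lemma in_band_shift a c d : in_band (a + c *: v) d <-> in_band a d.
Proof.
have shift b e : in_band b d -> in_band (b + e *: v) d.
  by move=> h; rewrite -[d]addr0; apply: in_bandD h (in_band_scale e).
split=> [/(shift _ (- c))|]; last exact: shift.
by rewrite -addrA -scalerDl subrr scale0r addr0.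
Qed.

Hypothesis vpos : forall i, 0 < v i ord0.

Lemma max_ratio_lt (a : 'cV[R]_k.+1) c :
  (forall i, a i ord0 < c * v i ord0) -> max_ratio a < c.
Proof. by move=> ac; rewrite /max_ratio /ratio ltr_pdivrMr. Qed.

Lemma min_ratio_gt (a : 'cV[R]_k.+1) c :
  (forall i, c * v i ord0 < a i ord0) -> c < min_ratio a.
Proof. by move=> ca; rewrite /min_ratio /ratio ltr_pdivlMr. Qed.

Lemma osc_band a : in_band a (osc a).
Proof.
exists (min_ratio a) => i; rewrite /osc addrC subrK.
apply/andP; split.
  by rewrite -(ler_pdivlMr _ _ (vpos i)) min_ratio_le.
by rewrite -(ler_pdivrMr _ _ (vpos i)) max_ratio_ge.
Qed.

Lemma osc_le_band a d : in_band a d -> osc a <= d.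
Proof.
case=> c ac; rewrite /osc /max_ratio /min_ratio.
set i := Order.arg_max _ _ _; set j := Order.arg_min _ _ _.
have /andP[_ hi] := ac i; have /andP[hj _] := ac j.
rewrite -ler_pdivrMr // in hi; rewrite -ler_pdivlMr // in hj.
by rewrite lerBlDr (le_trans hi) // addrC lerD2l.
Qed.

Lemma osc_le0 a : osc a <= 0 -> a = min_ratio a *: v.
Proof.
move=> a0; apply/matrixP => i j; rewrite (ord1 j) mxE.
have e : ratio a i = min_ratio a.
  apply/eqP; rewrite eq_le min_ratio_le andbT.
  by rewrite (le_trans (max_ratio_ge a i)) // -subr_le0.
by rewrite -e /ratio mulfVK // gt_eqF.
Qed.

Lemma osc_shift a c : osc (a + c *: v) = osc a.
Proof.
apply/eqP; rewrite eq_le !osc_le_band //.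
  exact/in_band_shift/osc_band.
exact/(in_band_shift _ c)/osc_band.
Qed.

Lemma osc_scale c : osc (c *: v) = 0.
Proof.
by apply/eqP; rewrite eq_le osc_ge0 andbT; exact/osc_le_band/in_band_scale.
Qed.

End Oscillation.

Lemma is_fwd_solution_shift (R : realType) (k : nat) (F : 'cV[R]_k -> 'cV[R]_k)
    (D : set 'cV[R]_k) (x : R -> 'cV[R]_k) (h : R) :
  0 <= h -> is_fwd_solution F D x -> is_fwd_solution F D (fun t => x (t + h)).
Proof.
move=> h0 [xD [xd xc]]; split; [|split].
- by move=> t t0; apply: xD; rewrite addr_ge0.
- move=> t t0 i.
  have dh : is_derive t (1 : R) (fun s : R => s + h) 1.
    by rewrite -[X in is_derive _ _ _ X]addr0; apply: is_deriveD.
  have := @is_derive1_comp R (fun s => x s i ord0) (fun s => s + h) t _ _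
    (xd (t + h) (ltr_wpDr h0 t0) i) dh.
  by rewrite mulr1.
- move=> i; have [->|hneq] := eqVneq h 0.
    by under eq_fun do rewrite addr0; rewrite add0r; apply: xc.
  have hpos : 0 < h by rewrite lt_def hneq h0.
  apply: cvg_at_right_filter.
  have sh : {for 0, continuous (fun s : R => s + h)}.
    by apply: cvgD; [apply: cvg_id|apply: cvg_cst].
  have xh : {for 0 + h, continuous (fun s => x s i ord0)}.
    rewrite add0r; apply/differentiable_continuous/derivable1_diffP.
    by case: (xd h hpos i).
  exact: continuous_comp sh xh.
Qed.

Section TranslationInvariantMonotoneFlow.
Variables (R : realType) (k : nat) (F : 'cV[R]_k.+1 -> 'cV[R]_k.+1)
  (D : set 'cV[R]_k.+1) (v : 'cV[R]_k.+1).
Hypothesis vpos : forall i, 0 < v i ord0.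
Hypothesis F_translate : forall x c, F (x + c *: v) = F x.
Hypothesis D_translate : forall x c, D x -> D (x + c *: v).
Hypothesis strongly_monotone : forall x1 x2 : R -> 'cV[R]_k.+1,
  is_fwd_solution F D x1 -> is_fwd_solution F D x2 ->
  vnonneg (x1 0 - x2 0) -> x1 0 <> x2 0 ->
  forall t : R, 0 < t -> forall i, x2 t i ord0 < x1 t i ord0.

Local Notation sol := (is_fwd_solution F D).

Lemma sol_translate x c : sol x -> sol (fun t => x t + c *: v).
Proof.
case=> xD [xd xc].
have entry s i : (x s + c *: v) i ord0 = x s i ord0 + c * v i ord0 by rewrite !mxE.
split; [|split].
- by move=> t t0; apply/D_translate/xD.
- move=> t t0 i; under eq_fun do rewrite entry.
  rewrite F_translate -[X in is_derive _ _ _ X]addr0.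
  exact: is_deriveD (xd t t0 i) (is_derive_cst _ _ _).
- move=> i; under eq_fun do rewrite entry.
  by rewrite entry; apply: cvgD (xc i) (cvg_cst _).
Qed.

Lemma sol_lt_translate x1 x2 c : sol x1 -> sol x2 ->
  (forall i, x1 0 i ord0 <= x2 0 i ord0 + c * v i ord0) ->
  x1 0 <> x2 0 + c *: v ->
  forall t, 0 < t -> forall i, x1 t i ord0 < x2 t i ord0 + c * v i ord0.
Proof.
move=> s1 s2 le0 ne t t0 i.
have := strongly_monotone (sol_translate c s2) s1 _ (nesym ne) t0 i.
by rewrite !mxE; apply=> j; rewrite !mxE subr_ge0.
Qed.

Lemma sol_le_translate x1 x2 c : sol x1 -> sol x2 ->
  (forall i, x1 0 i ord0 <= x2 0 i ord0 + c * v i ord0) ->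
  forall t, 0 <= t -> forall i, x1 t i ord0 <= x2 t i ord0 + c * v i ord0.
Proof.
move=> s1 s2 le0 t; rewrite le_eqVlt => /predU1P[<-//|t0] i.
apply/ler_addgt0Pr => e e0.
pose eps := e / v i ord0.
have eps0 : 0 < eps by rewrite divr_gt0.
have le0' j : x1 0 j ord0 <= x2 0 j ord0 + (c + eps) * v j ord0.
  by rewrite (le_trans (le0 j)) // lerD2l ler_pM2r // lerDl ltW.
have ne : x1 0 <> x2 0 + (c + eps) *: v.
  move=> E; have := le0 i; rewrite E !mxE lerD2l mulrDl gerDl.
  by rewrite leNgt mulr_gt0.
have := sol_lt_translate s1 s2 le0' ne t0 i.
by rewrite mulrDl /eps divfK ?gt_eqF // addrA => /ltW.
Qed.

Lemma in_band_sol x1 x2 d : sol x1 -> sol x2 -> in_band v (x1 0 - x2 0) d ->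
  forall t, 0 <= t -> in_band v (x1 t - x2 t) d.
Proof.
move=> s1 s2 [c band] t t0; exists c => i; rewrite !mxE.
have lo j : x2 0 j ord0 <= x1 0 j ord0 + (- c) * v j ord0.
  by have /andP[+ _] := band j; rewrite !mxE mulNr; lra.
have up j : x1 0 j ord0 <= x2 0 j ord0 + (c + d) * v j ord0.
  by have /andP[_ +] := band j; rewrite !mxE; lra.
have := sol_le_translate s2 s1 lo t0 i; have := sol_le_translate s1 s2 up t0 i.
by rewrite mulNr; lra.
Qed.

Lemma osc_sol_lt x1 x2 : sol x1 -> sol x2 ->
  (forall c, x1 0 - x2 0 <> c *: v) ->
  forall t, 0 < t -> osc v (x1 t - x2 t) < osc v (x1 0 - x2 0).
Proof.
move=> s1 s2 nscale t t0; set a := x1 0 - x2 0; set a' := x1 t - x2 t.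
have up i : a' i ord0 < max_ratio v a * v i ord0.
  suff : x1 t i ord0 < x2 t i ord0 + max_ratio v a * v i ord0 by rewrite !mxE; lra.
  apply: sol_lt_translate => // [j|E].
    by have := max_ratio_ge v a j; rewrite /ratio ler_pdivrMr // !mxE; lra.
  by apply: (nscale (max_ratio v a)); rewrite E addrAC subrr add0r.
have lo i : min_ratio v a * v i ord0 < a' i ord0.
  suff : x2 t i ord0 < x1 t i ord0 + (- min_ratio v a) * v i ord0.
    by rewrite !mxE mulNr; lra.
  apply: sol_lt_translate => // [j|E].
    by have := min_ratio_le v a j; rewrite /ratio ler_pdivlMr // !mxE mulNr; lra.
  apply: (nscale (min_ratio v a)).
  by rewrite E opprD addrA subrr add0r scaleNr opprK.
exact: ltrB (max_ratio_lt vpos up) (min_ratio_gt vpos lo).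
Qed.

Definition band_cluster (x : R -> 'cV[R]_k.+1) (q : 'cV[R]_k.+1) : Prop :=
  forall e, 0 < e -> forall T, exists t, T <= t /\ 0 <= t /\ in_band v (x t - q) e.

Definition on_v_line (y : R -> 'cV[R]_k.+1) : Prop :=
  forall t, 0 <= t -> exists c, y t = y 0 + c *: v.

Lemma band_shadow x y : sol x -> sol y -> band_cluster x (y 0) ->
  forall e, 0 < e -> forall T, exists t0, T <= t0 /\
    forall s, 0 <= s -> in_band v (x (s + t0) - y s) e.
Proof.
move=> sx sy cl e e0 T; have [t0 [Tt0 [t00 band]]] := cl e e0 T.
exists t0; split=> //.
by apply: in_band_sol (is_fwd_solution_shift t00 sx) sy _; rewrite add0r.
Qed.

Lemma cluster_sol_on_v_line x y : sol x -> sol y -> band_cluster x (y 0) ->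
  on_v_line y.
Proof.
move=> sx sy cl h h0.
suff g0 : osc v (y h - y 0) <= 0.
  by exists (min_ratio v (y h - y 0)); rewrite -(osc_le0 vpos g0) addrC subrK.
rewrite leNgt; apply/negP => g0pos.
have hpos : 0 < h.
  rewrite lt_def h0 andbT; have := g0pos; apply: contraTneq => ->.
  by rewrite subrr osc0 ltxx.
set g0 := osc v _ in g0pos.
have nscale c : y (0 + h) - y 0 <> c *: v.
  by move=> E; move: g0pos; rewrite /g0 -[h]add0r E (osc_scale vpos) ltxx.
have := osc_sol_lt (is_fwd_solution_shift (ltW hpos) sy) sy nscale ltr01.
rewrite add0r -/g0; set g1 := osc v _ => g1g0.
(* x shadows y within e from time t0 on, so from time 1 + t0 on its increments
   over time h have oscillation at most g1 + 2e; at a later time t1 where x is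
   within e of y 0 this gives g0 <= g1 + 4e. *)
pose e := (g0 - g1) / 8.
have e0 : 0 < e by rewrite divr_gt0 // subr_gt0.
have [t0 [t0_ge0 sh0]] := band_shadow sx sy cl e0 0.
have drift0 : in_band v (x (1 + h + t0) - x (1 + t0)) (e + e + g1).
  have -> : x (1 + h + t0) - x (1 + t0) =
      (x (1 + h + t0) - y (1 + h)) - (x (1 + t0) - y 1) + (y (1 + h) - y 1).
    by apply/matrixP => i j; rewrite !mxE; ring.
  apply: in_bandD (osc_band vpos _); apply: in_bandD; last exact/in_bandN/sh0.
  by apply: sh0; rewrite addr_ge0.
have drift s : 0 <= s ->
    in_band v (x (s + (1 + h + t0)) - x (s + (1 + t0))) (e + e + g1).
  have from t : 0 <= t -> sol (fun s => x (s + t)).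
    by move=> t_ge0; apply: is_fwd_solution_shift.
  apply: (in_band_sol (from _ _) (from _ _)); rewrite ?add0r //;
    by rewrite !addr_ge0 // ltW.
have [t1 [t1ge sh1]] := band_shadow sx sy cl e0 (1 + t0).
have := drift (t1 - (1 + t0)); rewrite subr_ge0 subrK => /(_ t1ge).
have -> : t1 - (1 + t0) + (1 + h + t0) = h + t1 by ring.
move=> drift1; have := sh1 0 (lexx 0); rewrite add0r => near_q.
have : in_band v (y h - y 0) (e + e + (e + e + g1)).
  have -> : y h - y 0 = (x t1 - y 0) - (x (h + t1) - y h) + (x (h + t1) - x t1).
    by apply/matrixP => i j; rewrite !mxE; ring.
  by apply: in_bandD drift1; apply: in_bandD near_q _; apply/in_bandN/sh1.
move=> /(osc_le_band vpos); rewrite -/g0 /e; lra.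
Qed.

Lemma band_cvg_of_cluster x y : sol x -> sol y -> band_cluster x (y 0) ->
  forall e, 0 < e -> exists T, forall t, T <= t -> in_band v (x t - y 0) e.
Proof.
move=> sx sy cl e e0; have [t0 [_ sh]] := band_shadow sx sy cl e0 0.
exists t0 => t tt0; have s0 : 0 <= t - t0 by rewrite subr_ge0.
have [c yc] := cluster_sol_on_v_line sx sy cl s0.
by have := sh _ s0; rewrite subrK yc opprD addrA -scaleNr => /in_band_shift.
Qed.

Lemma on_v_line_sols_diff y y' : sol y -> sol y' -> on_v_line y -> on_v_line y' ->
  exists c, y 0 - y' 0 = c *: v.
Proof.
move=> sy sy' line line'; apply: contrapT => nscale.
have [c1 e1] := line 1 ler01; have [c2 e2] := line' 1 ler01.
have := osc_sol_lt sy sy' (fun c E => nscale (ex_intro _ c E)) ltr01.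
have -> : y 1 - y' 1 = (y 0 - y' 0) + (c1 - c2) *: v.
  by rewrite e1 e2 scalerBl; apply/matrixP => i j; rewrite !mxE; ring.
by rewrite osc_shift // ltxx.
Qed.

End TranslationInvariantMonotoneFlow.

Lemma entry_le_norm1 (R : realType) (k : nat) (a : 'cV[R]_k) i : `|a i ord0| <= norm1 a.
Proof. by rewrite /norm1 (bigD1 i) //= lerDl sumr_ge0. Qed.

Lemma norm1_ge0 (R : realType) (k : nat) (a : 'cV[R]_k) : 0 <= norm1 a.
Proof. by rewrite sumr_ge0. Qed.

Lemma norm1_sub_le (R : realType) (k : nat) (a b : 'cV[R]_k) :
  norm1 (a - b) <= norm1 a + norm1 b.
Proof. by rewrite /norm1 -big_split ler_sum // => i _; rewrite !mxE ler_normB. Qed.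

Lemma norm1_cvg0 (R : realType) (k : nat) (T : Type) (F : set_system T) {FF : Filter F}
    (S : T -> 'cV[R]_k) (p : 'cV[R]_k) :
  (forall i, (fun t => S t i ord0) @ F --> p i ord0) ->
  norm1 (S t - p) @[t --> F] --> 0.
Proof.
move=> Sp; have -> : 0 = \sum_(i < k) `|p i ord0 - p i ord0| :> R.
  by rewrite big1 // => i _; rewrite subrr normr0.
have -> : (fun t => norm1 (S t - p)) = (fun t => \sum_i `|S t i ord0 - p i ord0|).
  by apply/funext => t; apply: eq_bigr => i _; rewrite !mxE.
apply: (@cvg_big _ _ +%R 0 xpredT add_continuous) => // i _.
by apply: cvg_norm; apply: cvgB (Sp i) (cvg_cst _).
Qed.

Lemma loc_lipschitz_cvg (R : realType) (n m : nat) (Rf : 'cV[R]_n -> 'cV[R]_m)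
    (T : Type) (F : set_system T) {FF : Filter F} (S : T -> 'cV[R]_n) (p : 'cV[R]_n) :
  loc_lipschitz_on (@vnonneg R n) Rf -> vnonneg p ->
  (\forall t \near F, vnonneg (S t)) ->
  (forall i, (fun t => S t i ord0) @ F --> p i ord0) ->
  forall j, (fun t => Rf (S t) j ord0) @ F --> Rf p j ord0.
Proof.
move=> HL p_ge0 S_ge0 Sp j; have [r [L [r0 lip]]] := HL p p_ge0.
have norm1_0 : norm1 (p - p) = 0.
  by rewrite subrr /norm1 big1 // => i _; rewrite !mxE normr0.
have Lnorm1 : L * norm1 (S t - p) @[t --> F] --> 0.
  by rewrite -(mulr0 L); apply: cvgMl_tmp; apply: norm1_cvg0.
have near_p : \forall t \near F, `|Rf (S t) j ord0 - Rf p j ord0| <= L * norm1 (S t - p).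
  near=> t; have := entry_le_norm1 (Rf (S t) - Rf p) j; rewrite !mxE => /le_trans; apply.
  apply: lip; rewrite ?norm1_0 //; first by near: t.
  by near: t; exact: cvgr_lt (norm1_cvg0 Sp) _ r0.
apply: (@squeeze_cvgr _ _ _ _ (fun t => Rf p j ord0 - L * norm1 (S t - p))
                             (fun t => Rf p j ord0 + L * norm1 (S t - p))).
- by apply: filterS near_p => t /=; rewrite ler_distl.
- by rewrite -[X in _ --> X]subr0; apply: cvgB (cvg_cst _) Lnorm1.
- by rewrite -[X in _ --> X]addr0; apply: cvgD (cvg_cst _) Lnorm1.
Unshelve. all: by end_near.
Qed.

Lemma derive0_const (R : realType) (f : R -> R) :
  (forall t : R, 0 < t -> is_derive t (1 : R) f 0) -> f @ 0^'+ --> f 0 ->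
  forall t : R, 0 <= t -> f t = f 0.
Proof.
move=> f'0 f0.
have const a b : 0 < a -> a <= b -> f b = f a.
  move=> a0 ab.
  have [c _] : exists2 c, c \in `[a, b] & f b - f a = (fun _ => 0) c * (b - a).
    apply: (@MVT_segment R f (fun _ => 0) a b ab).
    - by move=> x; rewrite in_itv /= => /andP[ax _]; apply: f'0; apply: lt_trans ax.
    - apply: continuous_in_subspaceT => x; rewrite inE /= in_itv /= => /andP[ax _].
      apply/differentiable_continuous/derivable1_diffP.
      by case: (f'0 x (lt_le_trans a0 ax)).
  by rewrite mul0r => /eqP; rewrite subr_eq0 => /eqP.
have f1 : f @ 0^'+ --> f 1.
  apply: cvg_near_cst; near=> s.
  have s0 : 0 < s by near: s; apply: nbhs_right_gt.
  have [s1|s1] := leP s 1; first by rewrite (const s 1).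
  by rewrite (const 1 s) // ltW.
have f01 : f 0 = f 1 := cvg_unique _ f0 f1.
move=> t; rewrite le_eqVlt => /predU1P[<-//|t0].
rewrite f01; have [t1|t1] := leP t 1; first by rewrite (const t 1).
by rewrite (const 1 t) // ltW.
Unshelve. all: by end_near.
Qed.

Lemma bounded_cluster (R : realType) (k : nat) (z : R -> 'cV[R]_k) (M : R) :
  (forall t, 0 <= t -> forall i, `|z t i ord0| <= M) ->
  exists q : 'cV[R]_k, forall e, 0 < e -> forall T, exists t,
    T <= t /\ 0 <= t /\ forall i, `|z t i ord0 - q i ord0| < e.
Proof.
move=> zM.
pose K := [set r : 'rV[R]_k | forall i, `[(- M), M]%classic (r ord0 i)].
have cK : compact K.
  by apply: (@rV_compact _ _ (fun=> `[(- M), M]%classic)) => _; apply: segment_compact.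
pose F := (fun t => (z t)^T) @ (@pinfty_nbhs R).
have FK : F K.
  rewrite /F /=; near=> t => i /=; rewrite mxE in_itv /= -ler_norml.
  by apply: zM; near: t; apply: nbhs_pinfty_ge; rewrite num_real.
have [r [_ clr]] := cK F (fmap_proper_filter _ _) FK.
exists r^T => e e0 T.
pose A := [set u : 'rV[R]_k | exists2 t, Num.max T 0 <= t & u = (z t)^T].
have FA : F A.
  by apply: filterS (nbhs_pinfty_ge (num_real (Num.max T 0))) => t tT; exists t.
have [u [[t tT ->]] [_ /(_ ord0) near_r]] := clr A _ FA (nbhsx_ballx r e e0).
rewrite ge_max in tT; case/andP: tT => Tt t0.
exists t; do 2!split=> //; move=> i; have := near_r i.
by rewrite /ball /= !mxE distrC.
Unshelve. all: by end_near.
Qed.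

Lemma mulmx_entry_bound (R : realType) (n m : nat) (G : 'M[R]_(n, m))
    (d : 'cV[R]_m) e i :
  (forall j, `|d j ord0| <= e) -> `|(G *m d) i ord0| <= (\sum_j `|G i j|) * e.
Proof.
move=> de; rewrite mxE mulr_suml (le_trans (ler_norm_sum _ _ _)) //.
by apply: ler_sum => j _; rewrite normrM ler_wpM2l.
Qed.

Lemma band_mulmx_bound (R : realType) (n k : nat) (G : 'M[R]_(n, k.+1))
    (v d : 'cV[R]_k.+1) e i :
  (forall j, 0 < v j ord0) -> G *m v = 0 -> in_band v d e -> 0 <= e ->
  `|(G *m d) i ord0| <= (\sum_j `|G i j|) * (e * \sum_j v j ord0).
Proof.
move=> vpos Gv [c band] e0.
have -> : G *m d = G *m (d - c *: v) by rewrite mulmxBr -scalemxAr Gv scaler0 subr0.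
apply: mulmx_entry_bound => j; rewrite !mxE; have /andP[lo up] := band j.
rewrite ger0_norm; last by rewrite subr_ge0.
have vj : v j ord0 <= \sum_l v l ord0.
  by rewrite (bigD1 j) //= lerDl sumr_ge0 // => l _; apply: ltW.
apply: (@le_trans _ _ (e * v j ord0)); last by rewrite ler_wpM2l.
by move: up; rewrite mulrDl; lra.
Qed.

Lemma norm2sq1_trmx_mul (R : realType) (k : nat) (v : 'cV[R]_k) :
  norm2sq v = 1 -> v^T *m v = 1%:M.
Proof.
move=> v1; apply/matrixP => i j; rewrite (ord1 i) (ord1 j) !mxE -v1.
by apply: eq_bigr => l _; rewrite !mxE expr2.
Qed.

Lemma kernel_line_left_inverse (R : realType) (n k : nat) (G : 'M[R]_(n, k.+1))
    (v : 'cV[R]_k.+1) :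
  norm2sq v = 1 -> (forall x, G *m x = 0 -> exists c, x = c *: v) ->
  exists L : 'M[R]_(k.+1, n + 1), L *m col_mx G v^T = 1%:M.
Proof.
move=> v1 kerG; have vTv := norm2sq1_trmx_mul v1.
suff /row_freeP[B BM] : row_free (col_mx G v^T)^T.
  by exists B^T; rewrite -[col_mx G v^T]trmxK -trmx_mul BM trmx1.
rewrite -kermx_eq0; apply/eqP/row_matrixP => i; rewrite row0.
set u := row i _.
have : col_mx G v^T *m u^T = 0.
  rewrite -[col_mx G v^T]trmxK -trmx_mul; apply/eqP; rewrite trmx_eq0.
  by apply/eqP/sub_kermxP; exact: row_sub.
rewrite mul_col_mx => /eqP; rewrite col_mx_eq0 => /andP[/eqP /kerG[c uc] /eqP].
rewrite uc -scalemxAr vTv => /matrixP/(_ ord0 ord0); rewrite !mxE mulr1 => c0.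
by rewrite -[u]trmxK uc c0 scale0r trmx0.
Qed.

Lemma kernel_line_proj_bound (R : realType) (n k : nat) (G : 'M[R]_(n, k.+1))
    (v : 'cV[R]_k.+1) :
  norm2sq v = 1 -> G *m v = 0 -> (forall x, G *m x = 0 -> exists c, x = c *: v) ->
  exists C, forall (w : 'cV[R]_k.+1) i,
    `|w i ord0 - (\sum_j v j ord0 * w j ord0) * v i ord0| <= C * norm1 (G *m w).
Proof.
move=> v1 Gv kerG; have [L LM] := kernel_line_left_inverse v1 kerG.
exists (\sum_i \sum_j `|L i j|) => w i.
set s := \sum_j v j ord0 * w j ord0; pose w' := w - s *: v.
have Gw' : G *m w' = G *m w by rewrite mulmxBr -scalemxAr Gv scaler0 subr0.
have vw' : v^T *m w' = 0.
  rewrite mulmxBr -scalemxAr norm2sq1_trmx_mul //; apply/eqP; rewrite subr_eq0.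
  apply/eqP/matrixP => a b; rewrite (ord1 a) (ord1 b) !mxE mulr1.
  by apply: eq_bigr => j _; rewrite !mxE.
have -> : w i ord0 - s * v i ord0 = (L *m col_mx (G *m w) 0) i ord0.
  by rewrite -Gw' -vw' -mul_col_mx mulmxA LM mul1mx !mxE.
apply: (@le_trans _ _ (\sum_j `|L i j| * norm1 (G *m w))).
  rewrite mxE (le_trans (ler_norm_sum _ _ _)) //.
  apply: ler_sum => j _; rewrite normrM ler_wpM2l //.
  rewrite -(@fintype.splitK n 1 j); case: (fintype.split j) => a /=.
    by rewrite col_mxEu entry_le_norm1.
  by rewrite col_mxEd mxE normr0 norm1_ge0.
rewrite -mulr_suml ler_wpM2r ?norm1_ge0 //.
by rewrite (bigD1 i) //= lerDl sumr_ge0 // => l _; rewrite sumr_ge0.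
Qed.

Section PrimitiveOnHalfLine.
Variables (R : realType) (g : R -> R).
Hypothesis g_cont : forall t, 0 < t -> {for t, continuous g}.
Hypothesis g_cont0 : g @ 0^'+ --> g 0.

Local Notation mu := (@lebesgue_measure R).
Local Notation G := (fun t => parameterized_integral mu 0 t g).

Lemma primitive_integrable (u : R) : 0 < u -> mu.-integrable `[0, u] (EFin \o g).
Proof.
move=> u0; apply: continuous_compact_integrable; first exact: segment_compact.
apply/continuous_within_itvP => //; split => [t /[!in_itv] /andP[t0 _]| |].
- exact: g_cont.
- exact: g_cont0.
- by apply: cvg_at_left_filter; apply: g_cont.
Qed.

Lemma primitive0 : G 0 = 0.
Proof. by rewrite /parameterized_integral set_itv1 Rintegral_set1. Qed.

Lemma primitive_is_derive (t : R) : 0 < t -> is_derive t (1 : R) G (g t).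
Proof.
move=> t0; have tt1 : t < t + 1 by rewrite ltrDl.
have [dG G'] := continuous_FTC1_closed tt1
  (primitive_integrable (lt_trans t0 tt1)) t0 (g_cont t0).
by have := derivableP dG; rewrite -derive1E G'.
Qed.

Lemma primitive_cvg0 : G @ 0^'+ --> 0.
Proof.
apply: cvg_at_right_filter.
exact: parameterized_integral_cvg_left ltr01 (primitive_integrable ltr01).
Qed.

End PrimitiveOnHalfLine.

Lemma is_fwd_solution_continuous (R : realType) (k : nat) (F : 'cV[R]_k -> 'cV[R]_k)
    (D : set 'cV[R]_k) (S : R -> 'cV[R]_k) t i :
  is_fwd_solution F D S -> 0 < t -> {for t, continuous (fun s => S s i ord0)}.
Proof.
case=> _ [Sd _] t0; apply/differentiable_continuous/derivable1_diffP.
by case: (Sd t t0 i).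
Qed.

Lemma sol_Rf_continuous (R : realType) (n m : nat) (F : 'cV[R]_n -> 'cV[R]_n)
    (Rf : 'cV[R]_n -> 'cV[R]_m) (S : R -> 'cV[R]_n) :
  loc_lipschitz_on (@vnonneg R n) Rf -> is_fwd_solution F (@vnonneg R n) S ->
  (forall j (t : R), 0 < t -> {for t, continuous (fun s => Rf (S s) j ord0)}) /\
  (forall j, (fun s => Rf (S s) j ord0) @ 0^'+ --> Rf (S 0) j ord0).
Proof.
move=> HL sS; have [S_ge0 [_ S_cont0]] := sS; split=> [j t t0|j].
  apply: (loc_lipschitz_cvg HL (S_ge0 t (ltW t0))) => [|i].
    by near=> s; apply/S_ge0/ltW; near: s; apply: lt_nbhsr.
  exact: is_fwd_solution_continuous sS t0.
apply: (loc_lipschitz_cvg HL (S_ge0 0 (lexx 0))) => //.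
by near=> s; apply/S_ge0/ltW; near: s; apply: nbhs_right_gt.
Unshelve. all: by end_near.
Qed.

Lemma sol_eq_affine_of_derive (R : realType) (n m : nat) (G : 'M[R]_(n, m))
    (Rf : 'cV[R]_n -> 'cV[R]_m) (D : set 'cV[R]_n) (sigma : 'cV[R]_n)
    (S : R -> 'cV[R]_n) (x : R -> 'cV[R]_m) :
  is_fwd_solution (fun s => G *m Rf s) D S -> S 0 = sigma + G *m x 0 ->
  (forall (t : R) j, 0 < t ->
     is_derive t (1 : R) (fun s => x s j ord0) (Rf (S t) j ord0)) ->
  (forall j, (fun s => x s j ord0) @ 0^'+ --> x 0 j ord0) ->
  forall t : R, 0 <= t -> S t = sigma + G *m x t.
Proof.
move=> [_ [S' S_cont0]] S0 x' x_cont0 t t0.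
apply/matrixP => i j; rewrite (ord1 j) {j}; apply/eqP; rewrite -subr_eq0.
pose h s := sigma i ord0 + \sum_j G i j * x s j ord0 - S s i ord0.
suff : h t = h 0 by rewrite /h S0 !mxE => ht; apply/eqP; lra.
apply: derive0_const t0 => [s s0|].
  have -> : h = cst (sigma i ord0) + \sum_j (fun s => G i j * x s j ord0)
                - (fun s => S s i ord0).
    by apply/funext => u; rewrite /h !fctE fct_sumE.
  have -> : 0 = 0 + \sum_j G i j * Rf (S s) j ord0 - (G *m Rf (S s)) i ord0.
    by rewrite add0r mxE subrr.
  apply: is_deriveB (S' s s0 i); apply: is_deriveD; apply: is_derive_sum => j.
  by have := is_deriveZ (G i j) (x' s j s0); apply.
apply: cvgB (S_cont0 i); apply: cvgD; first exact: cvg_cst.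
apply: (@cvg_big _ _ +%R 0 xpredT add_continuous) => // j _.
by apply: cvgMl_tmp; apply: x_cont0.
Qed.

Lemma sol_lift (R : realType) (n m : nat) (G : 'M[R]_(n, m))
    (Rf : 'cV[R]_n -> 'cV[R]_m) (sigma : 'cV[R]_n) (S : R -> 'cV[R]_n) (a : 'cV[R]_m) :
  loc_lipschitz_on (@vnonneg R n) Rf ->
  is_fwd_solution (fun s => G *m Rf s) (@vnonneg R n) S ->
  S 0 = sigma + G *m a ->
  exists x : R -> 'cV[R]_m,
    is_fwd_solution (fun x => Rf (sigma + G *m x))
       [set x | vnonneg (sigma + G *m x)] x /\
    x 0 = a /\ (forall t, 0 <= t -> S t = sigma + G *m x t).
Proof.
move=> HL sS S0; have [g_cont g_cont0] := sol_Rf_continuous HL sS.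
pose I j t := parameterized_integral (@lebesgue_measure R) 0 t (fun s => Rf (S s) j ord0).
pose x t := a + \col_j I j t.
have xE j : (fun s => x s j ord0) = (fun s => a j ord0 + I j s).
  by apply/funext => s; rewrite !mxE.
have x0 : x 0 = a by apply/matrixP => i j; rewrite (ord1 j) !mxE /I primitive0 addr0.
have x' (t : R) j : 0 < t -> is_derive t (1 : R) (fun s => x s j ord0) (Rf (S t) j ord0).
  move=> t0; rewrite xE -[Rf _ _ _]add0r.
  exact: is_deriveD (is_derive_cst _ _ _) (primitive_is_derive (g_cont j) (g_cont0 j) t0).
have x_cont0 j : (fun s => x s j ord0) @ 0^'+ --> x 0 j ord0.
  rewrite xE x0 -[X in _ --> X]addr0; apply: cvgD (cvg_cst _) _.
  exact: primitive_cvg0 (g_cont j) (g_cont0 j).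
have S0x : S 0 = sigma + G *m x 0 by rewrite x0.
have Sx := sol_eq_affine_of_derive sS S0x x' x_cont0.
exists x; split; last by split.
split; [|split].
- by move=> t t0 /=; rewrite -Sx //; apply: sS.1.
- by move=> t t0 j; rewrite -Sx ?ltW //; apply: x'.
- exact: x_cont0.
Qed.

Lemma pos_col_lbound (R : realType) (k : nat) (v : 'cV[R]_k.+1) :
  (forall i, 0 < v i ord0) -> exists2 vm, 0 < vm & forall i, vm <= v i ord0.
Proof.
move=> vpos; exists (v (Order.arg_min ord0 xpredT (fun i => v i ord0)) ord0) => //.
by move=> i; case: arg_minP => // j _ /(_ i isT).
Qed.

Section ReducedFlow.
Variables (R : realType) (n k : nat) (Gamma : 'M[R]_(n, k.+1))
  (Rf : 'cV[R]_n -> 'cV[R]_k.+1) (sigma : 'cV[R]_n) (v : 'cV[R]_k.+1).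
Hypothesis vpos : forall i, 0 < v i ord0.
Hypothesis v_unit : norm2sq v = 1.
Hypothesis Gv : Gamma *m v = 0.
Hypothesis kerG : forall x, Gamma *m x = 0 -> exists c, x = c *: v.

Local Notation f := (fun x => Rf (sigma + Gamma *m x)).
Local Notation X := [set x | vnonneg (sigma + Gamma *m x)].

Lemma mulmx_translate x c : Gamma *m (x + c *: v) = Gamma *m x.
Proof. by rewrite mulmxDr -scalemxAr Gv scaler0 addr0. Qed.

Lemma f_translate x c : f (x + c *: v) = f x.
Proof. by rewrite /= mulmx_translate. Qed.

Lemma X_translate x c : X x -> X (x + c *: v).
Proof. by rewrite /= mulmx_translate. Qed.

Lemma bounded_band_cluster (x : R -> 'cV[R]_k.+1) M :
  (forall t, 0 <= t -> norm1 (sigma + Gamma *m x t) <= M) ->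
  exists q, band_cluster v x q.
Proof.
move=> xM; have [C projC] := kernel_line_proj_bound v_unit Gv kerG.
pose z t := x t - (\sum_j v j ord0 * x t j ord0) *: v.
have zM t : 0 <= t -> forall i, `|z t i ord0| <= `|C| * (M + norm1 sigma).
  move=> t0 i; have := projC (x t) i; rewrite !mxE => /le_trans; apply.
  apply: (@le_trans _ _ (`|C| * norm1 (Gamma *m x t))).
    by rewrite ler_wpM2r ?norm1_ge0 // ler_norm.
  rewrite ler_wpM2l // -[Gamma *m x t](addKr sigma) addrC.
  by apply: le_trans (norm1_sub_le _ _) _; rewrite lerD2r xM.
have [q near_q] := bounded_cluster zM; have [vm vm0 vmv] := pos_col_lbound vpos.
exists q => e e0 T; have e'0 : 0 < e / 2 * vm by rewrite !mulr_gt0.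
have [t [Tt [t0 zq]]] := near_q _ e'0 T.
exists t; do 2!split => //.
apply/(in_band_shift v _ (- (\sum_j v j ord0 * x t j ord0))).
rewrite scaleNr addrAC -/(z t).
exists (- (e / 2)) => i; have := zq i; rewrite ltr_norml !mxE => /andP[lo up].
have : e / 2 * vm <= e / 2 * v i ord0 by rewrite ler_wpM2l ?vmv // divr_ge0 // ltW.
by rewrite mulNr; lra.
Qed.

Lemma mulmx_band_small i w : 0 < w ->
  exists2 e, 0 < e & forall d, in_band v d e -> `|(Gamma *m d) i ord0| < w.
Proof.
move=> w0; pose A := \sum_j `|Gamma i j|; pose V := \sum_j v j ord0.
have A0 : 0 <= A by rewrite sumr_ge0.
have V0 : 0 <= V by rewrite sumr_ge0 // => j _; apply: ltW.
have AV0 : 0 < (A + 1) * (V + 1) by rewrite mulr_gt0 // ltr_wpDl.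
pose e := w / ((A + 1) * (V + 1)).
have e0 : 0 < e by rewrite divr_gt0.
have we : w = e * ((A + 1) * (V + 1)) by rewrite divfK // gt_eqF.
exists e => // d band.
apply: le_lt_trans (band_mulmx_bound i vpos Gv band (ltW e0)) _.
rewrite -/A -/V we; nra.
Qed.

Lemma image_decomposition x q :
  sigma + Gamma *m x = (sigma + Gamma *m q) + Gamma *m (x - q).
Proof. by rewrite mulmxBr [_ - Gamma *m q]addrC addrA addrK. Qed.

Lemma band_cluster_image_nonneg (x : R -> 'cV[R]_k.+1) q :
  (forall t, 0 <= t -> X (x t)) -> band_cluster v x q -> X q.
Proof.
move=> xX cl i; rewrite leNgt -oppr_gt0; apply/negP => neg.
have [e e0 small] := mulmx_band_small i neg.
have [t [_ [t0 band]]] := cl e e0 0.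
have := xX t t0 i; rewrite (image_decomposition _ q) mxE.
by have := small _ band; rewrite ltr_norml; lra.
Qed.

Lemma band_cvg_image (S : R -> 'cV[R]_n) (x : R -> 'cV[R]_k.+1) q :
  (forall t, 0 <= t -> S t = sigma + Gamma *m x t) ->
  (forall e, 0 < e -> exists T, forall t, T <= t -> in_band v (x t - q) e) ->
  forall i, (fun t => S t i ord0) @ +oo --> (sigma + Gamma *m q) i ord0.
Proof.
move=> Sx bandT i; apply/cvgrPdist_lt => w w0.
have [e e0 small] := mulmx_band_small i w0; have [T bandt] := bandT e e0.
near=> t; rewrite Sx; last by near: t; apply: nbhs_pinfty_ge; rewrite num_real.
rewrite distrC (image_decomposition _ q) mxE addrAC subrr add0r; apply/small/bandt.
by near: t; apply: nbhs_pinfty_ge; rewrite num_real.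
Unshelve. all: by end_near.
Qed.

Hypothesis Rf_lip : loc_lipschitz_on (@vnonneg R n) Rf.
Hypothesis complete : forall rho : 'cV[R]_n, vnonneg rho ->
  exists S, is_fwd_solution (fun s => Gamma *m Rf s) (@vnonneg R n) S /\ S 0 = rho.
Hypothesis bounded : forall S : R -> 'cV[R]_n,
  is_fwd_solution (fun s => Gamma *m Rf s) (@vnonneg R n) S ->
  exists M : R, forall t : R, 0 <= t -> norm1 (S t) <= M.
Hypothesis strongly_monotone : forall x1 x2 : R -> 'cV[R]_k.+1,
  is_fwd_solution f X x1 -> is_fwd_solution f X x2 ->
  vnonneg (x1 0 - x2 0) -> x1 0 <> x2 0 ->
  forall t : R, 0 < t -> forall i, x2 t i ord0 < x1 t i ord0.

Lemma sol_limit (S : R -> 'cV[R]_n) (a : 'cV[R]_k.+1) :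
  is_fwd_solution (fun s => Gamma *m Rf s) (@vnonneg R n) S ->
  S 0 = sigma + Gamma *m a ->
  exists y, [/\ is_fwd_solution f X y, on_v_line v y &
    forall i, (fun t => S t i ord0) @ +oo --> (sigma + Gamma *m y 0) i ord0].
Proof.
move=> sS S0; have [x [sx [_ Sx]]] := sol_lift Rf_lip sS S0.
have [M SM] := bounded sS.
have [q cl] : exists q, band_cluster v x q.
  by apply: (bounded_band_cluster (M := M)) => t t0; rewrite -Sx ?SM.
have [S' [sS' S'0]] := complete (band_cluster_image_nonneg sx.1 cl).
have [y [sy [y0 _]]] := sol_lift Rf_lip sS' S'0; rewrite -y0 in cl.
exists y; split => //.
  exact (cluster_sol_on_v_line vpos f_translate X_translate strongly_monotone sx sy cl).
apply: band_cvg_image Sx _.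
exact (band_cvg_of_cluster vpos f_translate X_translate strongly_monotone sx sy cl).
Qed.

End ReducedFlow.

Unset Implicit Arguments.
Set Strict Implicit.

Theorem corollary3 (R : realType) (n m : nat)
  (Gamma : 'M[R]_(n, m)) (Rf : 'cV[R]_n -> 'cV[R]_m)
  (* R locally Lipschitz on the nonnegative orthant *)
  (HLip : loc_lipschitz_on (@vnonneg R n) Rf)
  (* S' = Gamma R(S) leaves the orthant invariant and is forward complete *)
  (Hcomplete : forall rho : 'cV[R]_n, vnonneg rho ->
     exists S : R -> 'cV[R]_n,
       is_fwd_solution (fun s => Gamma *m Rf s) (@vnonneg R n) S /\ S 0 = rho)
  (* (1) rank m-1, kernel spanned by a positive unit vector *)
  (Hrank : \rank Gamma = m.-1)
  (Hker : exists v : 'cV[R]_m,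
     (forall i : 'I_m, 0 < v i ord0) /\ norm2sq v = 1 /\
     (forall x : 'cV[R]_m, Gamma *m x = 0 <-> exists c : R, x = c *: v))
  (* (2) all solutions in the orthant are bounded *)
  (Hbounded : forall S : R -> 'cV[R]_n,
     is_fwd_solution (fun s => Gamma *m Rf s) (@vnonneg R n) S ->
     exists M : R, forall t : R, 0 <= t -> norm1 (S t) <= M)
  (sigma : 'cV[R]_n) (Hsigma : vnonneg sigma)
  (* (3) x' = f_sigma(x) = R(sigma + Gamma x) on X_sigma is strongly monotone *)
  (Hmono : forall x1 x2 : R -> 'cV[R]_m,
     is_fwd_solution (fun x => Rf (sigma + Gamma *m x))
       [set x | vnonneg (sigma + Gamma *m x)] x1 ->
     is_fwd_solution (fun x => Rf (sigma + Gamma *m x))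
       [set x | vnonneg (sigma + Gamma *m x)] x2 ->
     vnonneg (x1 0 - x2 0) -> x1 0 <> x2 0 ->
     forall t : R, 0 < t -> forall i : 'I_m, x2 t i ord0 < x1 t i ord0) :
  exists zeta : 'cV[R]_n, vnonneg zeta /\
    forall rho : 'cV[R]_n, vnonneg rho ->
      (exists y : 'cV[R]_m, rho - sigma = Gamma *m y) ->
      forall S : R -> 'cV[R]_n,
        is_fwd_solution (fun s => Gamma *m Rf s) (@vnonneg R n) S -> S 0 = rho ->
        forall i : 'I_n, (fun t : R => S t i ord0) @ +oo --> zeta i ord0.
Proof.
case: m Gamma Rf HLip Hcomplete Hrank Hker Hbounded Hmono =>
  [|k] Gamma Rf HLip Hcomplete _ [v [vpos [v_unit kerP]]] Hbounded Hmono.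
  by move: v_unit; rewrite /norm2sq big_ord0 => /esym/eqP; rewrite oner_eq0.
have Gv : Gamma *m v = 0 by apply/kerP; exists 1; rewrite scale1r.
have kerG x : Gamma *m x = 0 -> exists c, x = c *: v by move/kerP.
have limit := sol_limit vpos v_unit Gv kerG HLip Hcomplete Hbounded Hmono.
have [S0 [sS0 S00]] := Hcomplete sigma Hsigma.
have S00' : S0 0 = sigma + Gamma *m 0 by rewrite mulmx0 addr0.
have [y0 [sy0 line0 _]] := limit S0 0 sS0 S00'.
exists (sigma + Gamma *m y0 0); split => [|rho _ [a rho_a] S sS S_rho i].
  exact: sy0.1 0 (lexx 0).
have Sa : S 0 = sigma + Gamma *m a by rewrite S_rho -rho_a addrC subrK.
have [y [sy line cvgS]] := limit S a sS Sa.
have [c y0y] := on_v_line_sols_diff vpos (f_translate Rf sigma Gv) (X_translate Gv)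
  Hmono sy0 sy line0 line.
suff -> : Gamma *m y0 0 = Gamma *m y 0 by apply: cvgS.
by rewrite -(subrK (y 0) (y0 0)) y0y addrC (mulmx_translate Gv).
Qed.
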